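(* The function $h$ is a height function, i.e. it satisfies: (A1) $h(L)=0$ if and only if $L=\emptyset$; (A2) if $h(L)<\infty$ and $L'\subseteq L$ then $h(L')\le h(L)$; (A3) if $h(L)<\infty$ and $L'\subseteq L-1$ then $h(L')\le h(L)$; (A4) if $h(L),h(L')\le s<\infty$, then $h(L'\cap L)\le s-1$ or $h(L'\cap(L-1))\le s-1$; for all finite $L,L'\subseteq\mathbb{N}$ and integers $s$.
   Context: $\mathbb{N}=\{0,1,2,\ldots\}$. For a finite $L\subseteq\mathbb{N}$ and an integer $r$, write $L+r:=\{x+r: x\in L,\ x+r\ge 0\}$. Define $h$ on finite subsets of $\mathbb{N}$ recursively on $|L|$: $h(\emptyset)=0$, and for $L\neq\emptyset$, $$h(L)=1+\max\Big\{h(L\cap(L+1)),\ \max_{M\in T(L)}\min\{h(L\cap M),\,h(L\cap(M-1))\}\Big\},$$ where $T(L)$ is the set of all finite $M\subseteq\mathbb{N}$ with $M\notin\{L,L+1\}$ and $0<|M|\le|L|$. *)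

From Stdlib Require Import ClassicalEpsilon.
From mathcomp Require Import all_boot.

Set Implicit Arguments.
Unset Strict Implicit.
Unset Printing Implicit Defensive.

(* Finite subsets of N, canonically represented by strictly increasing
   sequences; thus Leibniz equality of [nset] is equality of sets. *)
Definition nset := {s : seq nat | sorted ltn s}.

Definition elems (A : nset) : seq nat := proj1_sig A.

Lemma mk_sorted (s : seq nat) : sorted ltn (sort leq (undup s)).
Proof.
rewrite ltn_sorted_uniq_leq sort_uniq undup_uniq /=.
apply: sort_sorted; exact: leq_total.
Qed.

Definition mk (s : seq nat) : nset := exist _ (sort leq (undup s)) (mk_sorted s).

Definition nmem (x : nat) (A : nset) : bool := x \in elems A.
Definition nsubset (A B : nset) : Prop := forall x, nmem x A -> nmem x B.
Definition ncard (A : nset) : nat := size (elems A).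
Definition nempty : nset := mk [::].

Definition ninter (A B : nset) : nset := mk [seq x <- elems A | x \in elems B].
Definition nshift1 (A : nset) : nset := mk [seq x.+1 | x <- elems A].
Definition nshiftm1 (A : nset) : nset :=
  mk [seq x.-1 | x <- elems A & 0 < x].

(* supremum (least upper bound) of a set of naturals; used only for
   nonempty bounded sets, where it is the maximum *)
Definition natsup (P : nat -> Prop) : nat :=
  epsilon (inhabits 0%N)
    (fun n => (forall m, P m -> m <= n) /\
              (forall k, (forall m, P m -> m <= k) -> n <= k)).

Definition inT (L M : nset) : Prop :=
  M <> L /\ M <> nshift1 L /\ 0 < ncard M /\ ncard M <= ncard L.

(* h with fuel; the recursive calls are on strictly smaller sets,
   so fuel |L| suffices. *)
Fixpoint hfuel (n : nat) (L : nset) : nat :=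
  match n with
  | 0 => 0
  | k.+1 =>
      if elems L == [::] then 0 else
      (maxn (hfuel k (ninter L (nshift1 L)))
            (natsup (fun v => exists M, inT L M /\
                 v = minn (hfuel k (ninter L M)) (hfuel k (ninter L (nshiftm1 M)))))).+1
  end.

Definition h (L : nset) : nat := hfuel (ncard L) L.

(* With these, induction on |L| gives monotonicity (A2) and the shift
   inequality h L <= h (L+1), from which (A3) follows.  Finally (A4) is a
   case analysis: in the generic case one of L'+1, L lies in T(L), T(L'),
   and the recursion inequality for the corresponding set concludes. *)

From Stdlib Require Import ClassicalEpsilon Classical.
From Stdlib Require Import FunctionalExtensionality PropExtensionality.
From mathcomp Require Import all_boot zify.

Set Implicit Arguments.
Unset Strict Implicit.
Unset Printing Implicit Defensive.

Lemma elems_uniq (A : nset) : uniq (elems A).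
Proof. by case: A => s /= Hs; exact: (sorted_uniq ltn_trans ltnn). Qed.

Lemma nset_ext (A B : nset) : (forall x, nmem x A = nmem x B) -> A = B.
Proof.
case: A => s Hs; case: B => t Ht /= E.
have st : s = t by apply: (irr_sorted_eq ltn_trans ltnn Hs Ht) => x; exact: E.
by subst t; congr exist; exact: bool_irrelevance.
Qed.

Lemma nmem_mk (x : nat) (s : seq nat) : nmem x (mk s) = (x \in s).
Proof. by rewrite /nmem /= mem_sort mem_undup. Qed.

Lemma nmem_inter (x : nat) (A B : nset) :
  nmem x (ninter A B) = nmem x A && nmem x B.
Proof. by rewrite /ninter nmem_mk mem_filter andbC. Qed.

Lemma nmem_shift1 (x : nat) (A : nset) :
  nmem x (nshift1 A) = (0 < x) && nmem x.-1 A.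
Proof.
rewrite /nshift1 nmem_mk; case: x => [|y] /=; first by apply/mapP => -[z _].
by rewrite (mem_map succn_inj).
Qed.

Lemma nmem_shiftm1 (x : nat) (A : nset) : nmem x (nshiftm1 A) = nmem x.+1 A.
Proof.
rewrite /nshiftm1 nmem_mk /nmem; apply/mapP/idP.
  by case=> y; rewrite mem_filter => /andP [y0 yA] ->; rewrite prednK.
by move=> H; exists x.+1 => //; rewrite mem_filter H.
Qed.

Lemma nset_empty (A : nset) : (forall x, nmem x A = false) -> A = nempty.
Proof. by move=> H; apply: nset_ext => x; rewrite H. Qed.

Lemma elems_nonnil (A : nset) : A <> nempty -> elems A != [::].
Proof.
move=> ne; apply/eqP => E; apply: ne; apply: nset_empty => x.
by rewrite /nmem E.
Qed.

Lemma ncard_gt0 (A : nset) : A <> nempty -> 0 < ncard A.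
Proof. by move/elems_nonnil; rewrite lt0n size_eq0. Qed.

Lemma inter_comm (A B : nset) : ninter A B = ninter B A.
Proof. by apply: nset_ext => x; rewrite !nmem_inter andbC. Qed.

Lemma shift1_inter (A B : nset) :
  nshift1 (ninter A B) = ninter (nshift1 A) (nshift1 B).
Proof.
apply: nset_ext => x; rewrite !nmem_inter !nmem_shift1 nmem_inter.
by case: (0 < x).
Qed.

Lemma shift1_inter_shiftm1 (A B : nset) :
  nshift1 (ninter A (nshiftm1 B)) = ninter (nshift1 A) B.
Proof.
apply: nset_ext => x; rewrite !nmem_inter !nmem_shift1 nmem_inter nmem_shiftm1.
by case: x.
Qed.

Lemma shiftm1_shift1 (A : nset) : nshiftm1 (nshift1 A) = A.
Proof. by apply: nset_ext => x; rewrite nmem_shiftm1 nmem_shift1. Qed.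

Lemma shift1_inj (A B : nset) : nshift1 A = nshift1 B -> A = B.
Proof. by move=> E; rewrite -(shiftm1_shift1 A) E shiftm1_shift1. Qed.

Lemma inter_subl (A B : nset) : nsubset (ninter A B) A.
Proof. by move=> x; rewrite nmem_inter => /andP []. Qed.

Lemma inter_subset (A A' B : nset) :
  nsubset A' A -> nsubset (ninter A' B) (ninter A B).
Proof. by move=> S x; rewrite !nmem_inter => /andP [/S -> ->]. Qed.

(* Only the empty set is contained in its own shift L+1 (look at its least
   element). *)
Lemma sub_shift1_empty (L : nset) : nsubset L (nshift1 L) -> L = nempty.
Proof.
move=> H; apply: nset_empty; elim=> [|x IH].
  by apply/negP => /H; rewrite nmem_shift1.
by apply/negP => /H; rewrite nmem_shift1 /= IH.
Qed.

Lemma ncard_sub (A B : nset) : nsubset A B -> ncard A <= ncard B.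
Proof. by move=> H; apply: uniq_leq_size; [exact: elems_uniq | exact: H]. Qed.

Lemma nset_eq_sub (A B : nset) : nsubset A B -> ncard B <= ncard A -> A = B.
Proof.
move=> H le; have [_ E] := uniq_min_size (elems_uniq A) (fun x => H x) le.
by apply: nset_ext => x; exact: E.
Qed.

Lemma ncard_shift1 (A : nset) : ncard (nshift1 A) = ncard A.
Proof.
rewrite /ncard /nshift1 /= size_sort undup_id ?size_map //.
by rewrite (map_inj_uniq succn_inj); exact: elems_uniq.
Qed.

Lemma ncard_inter_lt (A B : nset) : ~ nsubset A B -> ncard (ninter A B) < ncard A.
Proof.
move=> H; rewrite ltnNge; apply/negP => le.
have E := nset_eq_sub (@inter_subl A B) le.
apply: H => x hx; have : nmem x (ninter A B) by rewrite E.
by rewrite nmem_inter => /andP [].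
Qed.

Lemma ncard_ind (P : nset -> Prop) :
  (forall L, (forall L', ncard L' < ncard L -> P L') -> P L) -> forall L, P L.
Proof.
move=> IH L; move: {2}(ncard L) (leqnn (ncard L)) => n.
elim: n L => [|n IHn] L Hn; apply: IH => L' lt; first by lia.
by apply: IHn; lia.
Qed.

Lemma ncard_inter_shift1_lt (L : nset) :
  L <> nempty -> ncard (ninter L (nshift1 L)) < ncard L.
Proof. by move=> ne; apply: ncard_inter_lt => /sub_shift1_empty. Qed.

Lemma inT_inter_lt (L M : nset) : inT L M ->
  ncard (ninter L M) < ncard L /\ ncard (ninter L (nshiftm1 M)) < ncard L.
Proof.
case=> [nML [nMS [_ le]]]; split; apply: ncard_inter_lt => H.
  by apply: nML; symmetry; apply: nset_eq_sub.
have H1 : nsubset (nshift1 L) M.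
  move=> x; rewrite nmem_shift1 => /andP [x0 /H].
  by rewrite nmem_shiftm1 prednK.
by apply: nMS; symmetry; apply: nset_eq_sub => //; rewrite ncard_shift1.
Qed.

Lemma inT_nonempty (L M : nset) : inT L M -> L <> nempty.
Proof. by case=> _ [_ [c1 c2]] E; move: c2; rewrite E; case: (ncard M) c1. Qed.

Lemma inT_sub (L L' M : nset) :
  nsubset L' L -> L' <> L -> inT L' M -> inT L M.
Proof.
move=> S neq [a [b [c d]]]; have cl := ncard_sub S.
split; [|split; [|split; [done|lia]]].
  by move=> E; subst M; apply: a; symmetry; apply: nset_eq_sub S d.
move=> E; subst M; apply: neq; apply: nset_eq_sub => //.
by move: d; rewrite ncard_shift1; lia.
Qed.

Lemma inT_shift1 (L M : nset) : inT L M -> inT (nshift1 L) (nshift1 M).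
Proof.
case=> [a [b [c d]]]; split; [|split; [|split]].
- by move/shift1_inj.
- by move/shift1_inj.
- by rewrite ncard_shift1.
- by rewrite !ncard_shift1.
Qed.

Definition split_value (f : nset -> nat) (L M : nset) : nat :=
  minn (f (ninter L M)) (f (ninter L (nshiftm1 M))).

Definition split_sup (f : nset -> nat) (L : nset) : nat :=
  natsup (fun v => exists M, inT L M /\ v = split_value f L M).

Definition hstep (f : nset -> nat) (L : nset) : nat :=
  (maxn (f (ninter L (nshift1 L))) (split_sup f L)).+1.

Lemma natsup_spec (P : nat -> Prop) (B : nat) : (forall m, P m -> m <= B) ->
  (forall m, P m -> m <= natsup P) /\
  (forall k, (forall m, P m -> m <= k) -> natsup P <= k).
Proof.
move=> HB; rewrite /natsup.
set Q := (fun n => (forall m, P m -> m <= n) /\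
              (forall k, (forall m, P m -> m <= k) -> n <= k)).
change (Q (epsilon (inhabits 0) Q)); apply: epsilon_spec; rewrite /Q.
elim: B HB => [|B IH] HB; first by exists 0.
case: (classic (P B.+1)) => PB; first by exists B.+1; split => // k; apply.
apply: IH => m Pm; have := HB m Pm; rewrite leq_eqVlt => /orP [/eqP E|//].
by subst m.
Qed.

Lemma hfuel_empty (n : nat) : hfuel n nempty = 0.
Proof. by case: n. Qed.

Lemma hfuelS (k : nat) (L : nset) :
  L <> nempty -> hfuel k.+1 L = hstep (hfuel k) L.
Proof. by move=> ne /=; rewrite (negbTE (elems_nonnil ne)). Qed.

Lemma hstep_congr (f g : nset -> nat) (L : nset) :
  (forall A, ncard A < ncard L -> f A = g A) -> L <> nempty ->
  hstep f L = hstep g L.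
Proof.
move=> E ne; rewrite /hstep E ?ncard_inter_shift1_lt //.
congr (maxn _ _).+1; congr natsup; apply: functional_extensionality => v.
apply: propositional_extensionality.
by split=> -[M [HM ->]]; exists M; split=> //;
  have [l1 l2] := inT_inter_lt HM; rewrite /split_value !E.
Qed.

Lemma hfuel_le (n : nat) (L : nset) : hfuel n L <= n.
Proof.
elim: n L => [|k IH] L //=; case: ifP => // _; rewrite ltnS geq_max IH /=.
have bound m : (exists M, inT L M /\
    m = minn (hfuel k (ninter L M)) (hfuel k (ninter L (nshiftm1 M)))) -> m <= k.
  by move=> [M [_ ->]]; rewrite geq_min IH.
by have [_ ->] := natsup_spec bound.
Qed.

Lemma hfuel_fuel (n m : nat) (L : nset) :
  ncard L <= n -> ncard L <= m -> hfuel n L = hfuel m L.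
Proof.
elim: n m L => [|n IH] m L Hn Hm;
  case: (classic (L = nempty)) => [->|ne]; rewrite ?hfuel_empty //;
  have := ncard_gt0 ne; first lia.
case: m Hm => [|m] Hm pos; first lia.
rewrite !hfuelS //; apply: hstep_congr => // A lt.
by apply: IH; lia.
Qed.

Lemma hfuel_h (n : nat) (L : nset) : ncard L <= n -> hfuel n L = h L.
Proof. by move=> le; apply: hfuel_fuel. Qed.

Lemma h_unfold (L : nset) : L <> nempty -> h L = hstep h L.
Proof.
move=> ne; have := ncard_gt0 ne; rewrite {1}/h.
case E: (ncard L) => [|k] // _; rewrite hfuelS //.
by apply: hstep_congr => // A lt; apply: hfuel_h; lia.
Qed.

Lemma h_empty : h nempty = 0.
Proof. exact: hfuel_empty. Qed.

(* The height never exceeds the cardinality (used to bound the supremum). *)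
Lemma h_bound (A : nset) : h A <= ncard A.
Proof. exact: hfuel_le. Qed.

Lemma h_split_sup (L : nset) :
  (forall M, inT L M -> split_value h L M <= split_sup h L) /\
  (forall b, (forall M, inT L M -> split_value h L M <= b) -> split_sup h L <= b).
Proof.
have [|ub least] := @natsup_spec
    (fun v => exists M, inT L M /\ v = split_value h L M) (ncard L).
  move=> m [M [_ ->]]; rewrite geq_min (leq_trans (h_bound _)) //.
  exact/ncard_sub/inter_subl.
split=> [M HM | b Hb]; first by apply: ub; exists M.
by apply: least => m [M [HM ->]]; exact: Hb.
Qed.

Lemma h_shift1_lt (L : nset) : L <> nempty -> h (ninter L (nshift1 L)) < h L.
Proof. by move=> ne; rewrite (h_unfold ne) ltnS leq_max leqnn. Qed.

Lemma h_split_lt (L M : nset) : inT L M -> split_value h L M < h L.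
Proof.
move=> HM; rewrite (h_unfold (inT_nonempty HM)) ltnS leq_max.
by have [ub _] := h_split_sup L; rewrite ub ?orbT.
Qed.

Lemma h_le_of_lt (L : nset) (b : nat) : L <> nempty ->
  h (ninter L (nshift1 L)) < b ->
  (forall M, inT L M -> split_value h L M < b) -> h L <= b.
Proof.
move=> ne H1 H2; rewrite (h_unfold ne); case: b H1 H2 => // b H1 H2.
rewrite ltnS geq_max -ltnS H1 /=.
by have [_ ->] := h_split_sup L => // M /H2.
Qed.

Lemma h_eq0 (L : nset) : h L = 0 <-> L = nempty.
Proof.
split=> [H0|->]; last exact: h_empty.
by apply: NNPP => ne; have := h_shift1_lt ne; rewrite H0.
Qed.

(* (A2): h is monotone for inclusion.  For L' ⊊ L every term in the
   recursion for L' is dominated, by induction, by a term for L. *)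
Lemma h_mono (L L' : nset) : nsubset L' L -> h L' <= h L.
Proof.
elim/ncard_ind: L L' => L IH L' S.
case: (classic (L' = nempty)) => [->|ne']; first by rewrite h_empty.
case: (classic (L' = L)) => [->|neq]; first by [].
have ne : L <> nempty.
  by move=> E; apply: ne'; apply: nset_empty => x; apply/negP => /S; rewrite E.
apply: h_le_of_lt => //.
  apply: leq_ltn_trans (h_shift1_lt ne).
  apply: IH; first exact: ncard_inter_shift1_lt.
  by move=> x; rewrite !nmem_inter !nmem_shift1 => /andP [/S -> /andP [-> /S]].
move=> M /(inT_sub S neq) HM; apply: leq_ltn_trans (h_split_lt HM).
have [l1 l2] := inT_inter_lt HM.
have e1 : h (ninter L' M) <= h (ninter L M) by apply/IH/inter_subset.
have e2 : h (ninter L' (nshiftm1 M)) <= h (ninter L (nshiftm1 M)).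
  exact/IH/inter_subset.
by rewrite /split_value; lia.
Qed.

(* Shifting up never decreases the height: the recursion for L+1 contains
   the shifted copy of every term of the recursion for L. *)
Lemma h_le_shift1 (L : nset) : h L <= h (nshift1 L).
Proof.
elim/ncard_ind: L => L IH.
case: (classic (L = nempty)) => [->|ne]; first by rewrite h_empty.
have ne1 : nshift1 L <> nempty.
  by move=> E; apply: ne; apply: shift1_inj; rewrite E; apply: nset_empty.
apply: h_le_of_lt => //.
  apply: leq_ltn_trans (h_shift1_lt ne1).
  by rewrite -shift1_inter IH // ncard_inter_shift1_lt.
move=> M HM; apply: leq_ltn_trans (h_split_lt (inT_shift1 HM)).
have [l1 l2] := inT_inter_lt HM.
rewrite /split_value -shift1_inter shiftm1_shift1 -shift1_inter_shiftm1.
by rewrite leq_min !geq_min !IH ?orbT.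
Qed.

(* Shifting A ∩ (B-1) up by one gives (A+1) ∩ B, so its height is at most
   that of B ∩ (A+1). *)
Lemma h_inter_shiftm1 (A B : nset) :
  h (ninter A (nshiftm1 B)) <= h (ninter B (nshift1 A)).
Proof. by rewrite (inter_comm B) -shift1_inter_shiftm1 h_le_shift1. Qed.

Lemma h_sub_shiftm1 (L L' : nset) : nsubset L' (nshiftm1 L) -> h L' <= h L.
Proof.
move=> S; apply: leq_trans (h_le_shift1 L') (h_mono _).
by move=> x; rewrite nmem_shift1 => /andP [x0 /S]; rewrite nmem_shiftm1 prednK.
Qed.

Lemma h_split_inter (L L' : nset) (s : nat) : 0 < s -> h L <= s -> h L' <= s ->
  h (ninter L' L) < s \/ h (ninter L' (nshiftm1 L)) < s.
Proof.
move=> s0 hL hL'; case: (classic (ninter L' L = nempty)) => [->|neI].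
  by left; rewrite h_empty.
have ne : L <> nempty.
  by move=> E; apply: neI; apply: nset_empty => x; rewrite nmem_inter E andbF.
have ne' : L' <> nempty.
  by move=> E; apply: neI; apply: nset_empty => x; rewrite nmem_inter E.
case: (classic (L' = L)) => [E|neq].
  subst L'; right; apply: leq_ltn_trans (h_inter_shiftm1 _ _) _.
  exact: leq_trans (h_shift1_lt ne) hL.
case: (classic (L = nshift1 L')) => [->|neq2].
  by left; apply: leq_trans (h_shift1_lt ne') hL'.
case: (leqP (ncard L') (ncard L)) => cle.
  have HM : inT L (nshift1 L').
    split; [by move/esym | split; [by move/shift1_inj | rewrite ncard_shift1]].
    by rewrite cle ncard_gt0.
  have := h_split_lt HM; rewrite /split_value shiftm1_shift1 (inter_comm L L').
  have := h_inter_shiftm1 L' L; lia.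
have HM : inT L' L.
  by split; [move/esym | split; [done | rewrite ncard_gt0 //; lia]].
by have := h_split_lt HM; rewrite /split_value; lia.
Qed.

Theorem proposition13 :
  (* (A1) *)
  (forall L : nset, h L = 0 <-> L = nempty) /\
  (* (A2) (h is nat-valued, so h(L) < ∞ always holds) *)
  (forall L L' : nset, nsubset L' L -> h L' <= h L) /\
  (* (A3) *)
  (forall L L' : nset, nsubset L' (nshiftm1 L) -> h L' <= h L) /\
  (* (A4) *)
  (forall (L L' : nset) (s : nat), 0 < s -> h L <= s -> h L' <= s ->
     h (ninter L' L) <= s - 1 \/ h (ninter L' (nshiftm1 L)) <= s - 1).
Proof.
split; [exact: h_eq0 | split; [exact: h_mono | split; [exact: h_sub_shiftm1|]]].
move=> L L' s s0 hL hL'.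
by case: (h_split_inter s0 hL hL') => ?; [left | right]; lia.
Qed.
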